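(* For $n\ge2$ and all $P,Q\in\Gamma_n$, $D_{\Psi J}(P\|Q)\le \frac43 D_{\Psi T}(P\|Q)$.
   Context: $\Gamma_n=\{P=(p_1,\dots,p_n): p_i>0,\ \sum p_i=1\}$. $\Psi(P\|Q)=\sum_{i=1}^n\frac{(p_i-q_i)^2(p_i+q_i)}{p_iq_i}$; $J(P\|Q)=\sum_{i=1}^n(p_i-q_i)\ln\frac{p_i}{q_i}$; $T(P\|Q)=\sum_{i=1}^n\frac{p_i+q_i}{2}\ln\frac{p_i+q_i}{2\sqrt{p_iq_i}}$. $D_{\Psi J}=\frac1{16}\Psi-\frac18J$, $D_{\Psi T}=\frac1{16}\Psi-T$. *)

(* concrete reals R. Probability vectors are functions nat -> R,
   whose coordinates 0..n-1 are used (p_1..p_n of the paper = P 0 .. P (n-1)). *)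
From Stdlib Require Import Reals.
Open Scope R_scope.

Fixpoint sumR (n : nat) (f : nat -> R) : R :=
  match n with
  | O => 0
  | S m => sumR m f + f m
  end.

Definition Gamma (n : nat) (P : nat -> R) : Prop :=
  (forall i, (i < n)%nat -> 0 < P i) /\ sumR n P = 1.

Definition Psi (n : nat) (P Q : nat -> R) : R :=
  sumR n (fun i => (P i - Q i) ^ 2 * (P i + Q i) / (P i * Q i)).

Definition Jdiv (n : nat) (P Q : nat -> R) : R :=
  sumR n (fun i => (P i - Q i) * ln (P i / Q i)).

Definition Tdiv (n : nat) (P Q : nat -> R) : R :=
  sumR n (fun i => (P i + Q i) / 2 * ln ((P i + Q i) / (2 * sqrt (P i * Q i)))).

Definition D_PsiJ (n : nat) (P Q : nat -> R) : R := Psi n P Q / 16 - Jdiv n P Q / 8.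
Definition D_PsiT (n : nat) (P Q : nat -> R) : R := Psi n P Q / 16 - Tdiv n P Q.

(* Multiplied by 48, the inequality reads Psi + 6 J - 64 T >= 0, and this holds
   summand by summand.  Each summand is positively homogeneous of degree one in
   (p, q), so it equals q (x^2 + 1) gap_profile x with x = sqrt (p / q).  Now
   gap_profile 1 = 0 and its derivative is 48 x gap_slope x / (x^2 + 1)^2, where
   gap_slope 1 = 0 and gap_slope has derivative (x^2 - 1)^4 / (6 x^5) >= 0.  So
   gap_slope changes sign from - to + at 1, and gap_profile, decreasing then
   increasing, attains its minimum 0 at 1. *)
From Stdlib Require Import Reals Lra Lia.
From Coquelicot Require Import Coquelicot.
Open Scope R_scope.

Lemma sumR_add (n : nat) (f g : nat -> R) :
  sumR n (fun i => f i + g i) = sumR n f + sumR n g.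
Proof. induction n as [|n IH]; simpl; [ring | rewrite IH; ring]. Qed.

Lemma sumR_sub (n : nat) (f g : nat -> R) :
  sumR n (fun i => f i - g i) = sumR n f - sumR n g.
Proof. induction n as [|n IH]; simpl; [ring | rewrite IH; ring]. Qed.

Lemma sumR_scal (n : nat) (c : R) (f : nat -> R) :
  sumR n (fun i => c * f i) = c * sumR n f.
Proof. induction n as [|n IH]; simpl; [ring | rewrite IH; ring]. Qed.

Lemma sumR_nonneg (n : nat) (f : nat -> R) :
  (forall i, (i < n)%nat -> 0 <= f i) -> 0 <= sumR n f.
Proof.
  induction n as [|n IH]; intros Hf; simpl; [lra |].
  assert (0 <= sumR n f) by (apply IH; intros i Hi; apply Hf; lia).
  assert (0 <= f n) by (apply Hf; lia).
  lra.
Qed.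

Lemma le_of_deriv_nonneg (g g' : R -> R) (a b : R) :
  a <= b ->
  (forall c, a <= c <= b -> is_derive g c (g' c)) ->
  (forall c, a <= c <= b -> 0 <= g' c) ->
  g a <= g b.
Proof.
  intros [Hab | ->] Hd Hpos; [| lra].
  destruct (MVT_cor2 g g' a b Hab) as [c [Hc Hmvt]].
  - intros c Hc. apply is_derive_Reals, Hd, Hc.
  - assert (0 <= g' c) by (apply Hpos; lra).
    nra.
Qed.

Lemma ge_of_deriv_nonpos (g g' : R -> R) (a b : R) :
  a <= b ->
  (forall c, a <= c <= b -> is_derive g c (g' c)) ->
  (forall c, a <= c <= b -> g' c <= 0) ->
  g b <= g a.
Proof.
  intros Hab Hd Hneg.
  enough (- g a <= - g b) by lra.
  apply (le_of_deriv_nonneg (fun x => - g x) (fun x => - g' x)); auto.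
  - intros c Hc. apply (is_derive_opp g). apply Hd, Hc.
  - intros c Hc. specialize (Hneg c Hc). lra.
Qed.

Definition gap_slope (x : R) : R := ln x + (x^8 - 8*x^6 + 8*x^2 - 1) / (24*x^4).

Definition gap_profile (x : R) : R :=
  (x^2 - 1)^2 / x^2 + 12 * ((x^2 - 1) / (x^2 + 1)) * ln x
  - 32 * ln ((x^2 + 1) / (2*x)).

Lemma gap_slope_1 : gap_slope 1 = 0.
Proof. unfold gap_slope. rewrite ln_1. field. Qed.

Lemma gap_profile_1 : gap_profile 1 = 0.
Proof.
  unfold gap_profile. replace ((1^2 + 1) / (2*1)) with 1 by field.
  rewrite ln_1. field.
Qed.

Lemma is_derive_gap_slope (x : R) :
  0 < x -> is_derive gap_slope x ((x^2 - 1)^4 / (6*x^5)).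
Proof.
  intros Hx. unfold gap_slope. auto_derive.
  - split; [lra | split; [| auto]].
    assert (0 < x*(x*(x*(x*1)))) by (repeat apply Rmult_lt_0_compat; lra).
    lra.
  - field. lra.
Qed.

Lemma is_derive_gap_profile (x : R) :
  0 < x -> is_derive gap_profile x (48 * x * gap_slope x / (x^2 + 1)^2).
Proof.
  intros Hx.
  assert (Hx2 : 0 < x*(x*1)) by (repeat apply Rmult_lt_0_compat; lra).
  unfold gap_profile, gap_slope. auto_derive.
  - repeat split; try lra.
    apply Rmult_lt_0_compat; [lra |]. apply Rinv_0_lt_compat. lra.
  - field. repeat split; lra.
Qed.

Lemma gap_slope_deriv_nonneg (x : R) : 0 < x -> 0 <= (x^2 - 1)^4 / (6*x^5).
Proof.
  intros Hx. apply Rmult_le_pos.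
  - replace ((x^2 - 1)^4) with (((x^2 - 1)^2)^2) by ring. apply pow2_ge_0.
  - left. apply Rinv_0_lt_compat, Rmult_lt_0_compat; [lra | apply pow_lt; lra].
Qed.

Lemma gap_slope_le (x y : R) : 0 < x <= y -> gap_slope x <= gap_slope y.
Proof.
  intros Hxy.
  apply (le_of_deriv_nonneg gap_slope (fun c => (c^2 - 1)^4 / (6*c^5))); try lra;
    intros c Hc; [apply is_derive_gap_slope | apply gap_slope_deriv_nonneg]; lra.
Qed.

Lemma gap_profile_nonneg (x : R) : 0 < x -> 0 <= gap_profile x.
Proof.
  intros Hx. rewrite <- gap_profile_1.
  set (h' := fun c => 48 * c * gap_slope c / (c^2 + 1)^2).
  assert (Hd : forall c, 0 < c -> is_derive gap_profile c (h' c))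
    by apply is_derive_gap_profile.
  assert (Hsign : forall c, 0 < c -> h' c = 48 * c / (c^2 + 1)^2 * gap_slope c).
  { intros c Hc. unfold h'. field. nra. }
  assert (Hweight : forall c, 0 < c -> 0 < 48 * c / (c^2 + 1)^2).
  { intros c Hc. apply Rmult_lt_0_compat; [lra |].
    apply Rinv_0_lt_compat, pow_lt. nra. }
  destruct (Rle_or_lt x 1) as [Hle | Hgt].
  - apply (ge_of_deriv_nonpos gap_profile h'); auto; intros c Hc; [apply Hd; lra |].
    rewrite Hsign by lra.
    assert (0 < 48 * c / (c^2 + 1)^2) by (apply Hweight; lra).
    assert (gap_slope c <= 0) by (rewrite <- gap_slope_1; apply gap_slope_le; lra).
    nra.
  - apply (le_of_deriv_nonneg gap_profile h'); try lra; intros c Hc; [apply Hd; lra |].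
    rewrite Hsign by lra.
    apply Rmult_le_pos; [left; apply Hweight; lra |].
    rewrite <- gap_slope_1. apply gap_slope_le. lra.
Qed.

Definition Psi_term (p q : R) : R := (p - q) ^ 2 * (p + q) / (p * q).
Definition J_term (p q : R) : R := (p - q) * ln (p / q).
Definition T_term (p q : R) : R := (p + q) / 2 * ln ((p + q) / (2 * sqrt (p * q))).

Definition PsiJT_gap (p q : R) : R := Psi_term p q + 6 * J_term p q - 64 * T_term p q.

Lemma PsiJT_gap_homogeneous (c p q : R) :
  0 < c -> 0 < p -> 0 < q -> PsiJT_gap (c * p) (c * q) = c * PsiJT_gap p q.
Proof.
  intros Hc Hp Hq.
  assert (Hratio : c * p / (c * q) = p / q) by (field; lra).
  assert (Hsqrt : sqrt (c * p * (c * q)) = c * sqrt (p * q)).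
  { replace (c * p * (c * q)) with (c * c * (p * q)) by ring.
    rewrite sqrt_mult_alt, sqrt_square; nra. }
  assert (Hmean : (c * p + c * q) / (2 * (c * sqrt (p * q)))
                  = (p + q) / (2 * sqrt (p * q))).
  { assert (0 < sqrt (p * q)) by (apply sqrt_lt_R0; nra). field. lra. }
  unfold PsiJT_gap, Psi_term, J_term, T_term.
  rewrite Hratio, Hsqrt, Hmean. field. lra.
Qed.

Lemma PsiJT_gap_square_1 (x : R) :
  0 < x -> PsiJT_gap (x ^ 2) 1 = (x ^ 2 + 1) * gap_profile x.
Proof.
  intros Hx.
  unfold PsiJT_gap, Psi_term, J_term, T_term, gap_profile.
  replace (x ^ 2 / 1) with (x * x) by field.
  replace (sqrt (x ^ 2 * 1)) with x
    by (rewrite Rmult_1_r, <- Rsqr_pow2, sqrt_Rsqr; lra).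
  rewrite ln_mult by lra.
  field. nra.
Qed.

Lemma PsiJT_gap_nonneg (p q : R) : 0 < p -> 0 < q -> 0 <= PsiJT_gap p q.
Proof.
  intros Hp Hq.
  set (x := sqrt (p / q)).
  assert (Hx : 0 < x) by (apply sqrt_lt_R0, Rdiv_lt_0_compat; lra).
  assert (Hp_eq : p = q * x ^ 2).
  { unfold x. rewrite <- Rsqr_pow2, Rsqr_sqrt by (left; apply Rdiv_lt_0_compat; lra).
    field. lra. }
  assert (Hgap : PsiJT_gap p q = q * ((x ^ 2 + 1) * gap_profile x)).
  { rewrite <- PsiJT_gap_square_1, <- PsiJT_gap_homogeneous, Rmult_1_r, <- Hp_eq
      by (try apply pow_lt; lra).
    reflexivity. }
  rewrite Hgap.
  apply Rmult_le_pos; [lra |].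
  apply Rmult_le_pos; [nra | apply gap_profile_nonneg; lra].
Qed.

Lemma Psi_J_T_combination_nonneg (n : nat) (P Q : nat -> R) :
  (forall i, (i < n)%nat -> 0 < P i) -> (forall i, (i < n)%nat -> 0 < Q i) ->
  0 <= Psi n P Q + 6 * Jdiv n P Q - 64 * Tdiv n P Q.
Proof.
  intros HP HQ.
  change (0 <= sumR n (fun i => Psi_term (P i) (Q i))
             + 6 * sumR n (fun i => J_term (P i) (Q i))
             - 64 * sumR n (fun i => T_term (P i) (Q i))).
  rewrite <- !sumR_scal, <- sumR_add, <- sumR_sub.
  apply sumR_nonneg. intros i Hi.
  apply PsiJT_gap_nonneg; auto.
Qed.

Theorem proposition5p13 (n : nat) (P Q : nat -> R) :
  (2 <= n)%nat -> Gamma n P -> Gamma n Q ->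
  D_PsiJ n P Q <= 4 / 3 * D_PsiT n P Q.
Proof.
  intros _ [HP _] [HQ _].
  pose proof (Psi_J_T_combination_nonneg n P Q HP HQ).
  unfold D_PsiJ, D_PsiT. lra.
Qed.
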